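(* Let $\textsc{mix}$ be a nice mixture with parameter space $\mathcal{W}$ and constant $a>0$, let $n\ge1$, $x^n\in\mathcal{X}^n$, $\mathbf{P}^n$ a sequence of $n$ probability matrices over $\mathcal{P}_+$, and $\mathbf{w}_1\in\mathcal{W}$. For $1\le i\le j\le n$ write $\ell^*(i,j,\textsc{mix}):=\ell^*(x_i^j,\mathbf{P}_i^j,\textsc{mix})$, where $x_i^j=x_i\dots x_j$ and $\mathbf{P}_i^j=\mathbf{P}_i,\dots,\mathbf{P}_j$. The minima below range over all $1\le s\le n$ and all integers $t_1=1<t_2<\dots<t_s<t_{s+1}=n+1$. 1. If $\alpha=2(1-b^{-1})/a$ with $b>1$, then $$\ell(x^n,\textsc{mix-ogd}(\mathbf{w}_1,\alpha,x^n,\mathbf{P}^n))\le\min_{s,t_2,\dots,t_s}\Big[\frac{a b^2\lvert\mathcal{W}\rvert^2}{4(b-1)}\,s + b\sum_{i=1}^s\ell^*(t_i,t_{i+1}-1,\textsc{mix})\Big].$$ 2. If $\alpha=\frac{2}{a}(1+n^{1/2})^{-1}$ and there is a constant $c>0$ such that $\ell^*(y^k,\mathbf{Q}^k,\textsc{mix})\le c\cdot k$ for all lengths $k\ge1$, all $y^k$ over $\mathcal{X}$ and all sequences $\mathbf{Q}^k$ of probability matrices over $\mathcal{P}_+$, then $$\ell(x^n,\textsc{mix-ogd}(\mathbf{w}_1,\alpha,x^n,\mathbf{P}^n))\le\min_{s,t_2,\dots,t_s}\Big[\big(a s\lvert\mathcal{W}\rvert^2+c\big)\sqrt n+\sum_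{i=1}^s\ell^*(t_i,t_{i+1}-1,\textsc{mix})\Big].$$
   Context: Let $\mathcal{X}=\{1,\dots,N\}$ with $1<N<\infty$, and $\mathcal{P}_+$ the set of probability distributions on $\mathcal{X}$ with positive probability on every letter. Fix $m>1$. A probability matrix over $\mathcal{P}_+$ is $\mathbf{P}=(\mathbf{p}(1)\cdots\mathbf{p}(N))$ with $\mathbf{p}(x)=(p_1(x),\dots,p_m(x))^{\mathsf T}$, $p_i\in\mathcal{P}_+$. $\ell(x,p):=-\log_2p(x)$. A mixture with parameter space $\mathcal{W}\subseteq\mathbb{R}^m$ maps $(\mathbf{w},\mathbf{P})$, $\mathbf{w}\in\mathcal{W}$, to $\textsc{mix}(\mathbf{w},\mathbf{P})\in\mathcal{P}_+$. It is nice if (1) $\mathcal{W}$ is non-empty, compact, convex; (2) $\mathbf{w}\mapsto\ell(x,\textsc{mix}(\mathbf{w},\mathbf{P}))$ is convex on $\mathcal{W}$ and (3) differentiable, for all $\mathbf{P}$ over $\mathcal{P}_+$, $x\in\mathcal{X}$; (4) there is $a>0$ with $\lvert\nabla_{\mathbf{w}}\ell(x,\textsc{mix}(\mathbf{w},\mathbf{P}))\rvert^2\le a\,\ell(x,\textsc{mix}(\mathbf{w},\mathbf{P}))$ for all $\mathbf{w}\in\mathcal{W}$, $\mathbf{P}$, $x$. $\lvert\mathcal{W}\rvert:=\sup_{\mathbf{u},\mathbf{v}\in\mathcal{W}}\lvert\mathbf{u}-\mathbf{v}\rvert$ (Euclidean diameter). Algorithm $\textsc{mix-ogd}(\mathbf{w}_1,\alpha,x^n,\mathbf{P}^n)$: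 for $k=1,\dots,n$ code $x_k$ with $\ell(x_k,\textsc{mix}(\mathbf{w}_k,\mathbf{P}_k))$ bits, then $\mathbf{w}_{k+1}=\mathrm{proj}(\mathbf{w}_k-\alpha\nabla_{\mathbf{w}}\ell(x_k,\textsc{mix}(\mathbf{w},\mathbf{P}_k))|_{\mathbf{w}=\mathbf{w}_k};\mathcal{W})$ with $\mathrm{proj}(\mathbf{v};\mathcal{W})=\arg\min_{\mathbf{w}\in\mathcal{W}}\lvert\mathbf{v}-\mathbf{w}\rvert^2$; its code length is $\ell(x^n,\textsc{mix-ogd}(\mathbf{w}_1,\alpha,x^n,\mathbf{P}^n)):=\sum_{k=1}^n\ell(x_k,\textsc{mix}(\mathbf{w}_k,\mathbf{P}_k))$. For a sequence $y^k$ and matrices $\mathbf{Q}^k$: $\ell^*(y^k,\mathbf{Q}^k,\textsc{mix}):=\min_{\mathbf{w}\in\mathcal{W}}\sum_{j=1}^k\ell(y_j,\textsc{mix}(\mathbf{w},\mathbf{Q}_j))$. *)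

From HB Require Import structures.
From mathcomp Require Import all_boot all_order all_algebra.
From mathcomp Require Import all_classical all_reals all_analysis.
Set Implicit Arguments. Unset Strict Implicit. Unset Printing Implicit Defensive.
Import Order.TTheory GRing.Theory Num.Theory.
Import numFieldNormedType.Exports.
Local Open Scope classical_set_scope.
Local Open Scope ring_scope.

Section Defs.
Variables (R : realType) (N m : nat).

(* Alphabet X = {1..N} is modelled by 'I_N. *)

Definition posdist (p : 'I_N -> R) : Prop :=
  (forall x, 0 < p x) /\ \sum_(x < N) p x = 1.

(* probability matrix: m x N, row i is p_i in P_+ ; P i x = p_i(x) *)
Definition probmat (P : 'M[R]_(m, N)) : Prop :=
  forall i : 'I_m, posdist (fun x => P i x).

Definition ell (x : 'I_N) (p : 'I_N -> R) : R := - (ln (p x) / ln 2).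

Definition enorm (v : 'rV[R]_m) : R := Num.sqrt (\sum_(i < m) v 0 i ^+ 2).

Definition grad (f : 'rV[R]_m -> R) (w : 'rV[R]_m) : 'rV[R]_m :=
  \row_(i < m) ('D_(delta_mx 0 i) f w).

Definition convex_set (W : set 'rV[R]_m) : Prop :=
  forall u v (t : R), W u -> W v -> 0 <= t <= 1 -> W (t *: u + (1 - t) *: v).

Definition convex_on (W : set 'rV[R]_m) (f : 'rV[R]_m -> R) : Prop :=
  forall u v (t : R), W u -> W v -> 0 <= t <= 1 ->
    f (t *: u + (1 - t) *: v) <= t * f u + (1 - t) * f v.

Definition diam (W : set 'rV[R]_m) : R :=
  sup [set enorm (u - v) | u in W & v in W].

(* A mixture is a map mix : R^m -> (m x N probability matrix) -> distribution
   on 'I_N; only its values at w in W (and, for differentiability, near W)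
   matter.  nice W mix a: the four conditions with constant a > 0. *)
Definition nice (W : set 'rV[R]_m)
    (mix : 'rV[R]_m -> 'M[R]_(m, N) -> 'I_N -> R) (a : R) : Prop :=
  [/\ W !=set0, compact W & convex_set W] /\
  (forall w P, W w -> probmat P -> posdist (mix w P)) /\
  (forall P x, probmat P -> convex_on W (fun w => ell x (mix w P))) /\
  (forall P x w, probmat P -> W w -> differentiable (fun w => ell x (mix w P)) w) /\
  0 < a /\
  (forall P x w, probmat P -> W w ->
     enorm (grad (fun w => ell x (mix w P)) w) ^+ 2 <= a * ell x (mix w P)).

(* proj(v;W) = argmin_{w in W} |v - w|^2 (exists and is unique for W nonempty,
   compact, convex) *)
Definition proj (W : set 'rV[R]_m) (v : 'rV[R]_m) : 'rV[R]_m :=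
  xget 0 [set w | W w /\ forall u, W u -> enorm (v - w) ^+ 2 <= enorm (v - u) ^+ 2].

(* ogd_w W mix w1 alpha x P k = w_{k+1}  (sequences indexed from 1) *)
Fixpoint ogd_w (W : set 'rV[R]_m) (mix : 'rV[R]_m -> 'M[R]_(m, N) -> 'I_N -> R)
    (w1 : 'rV[R]_m) (alpha : R) (x : nat -> 'I_N) (P : nat -> 'M[R]_(m, N))
    (k : nat) : 'rV[R]_m :=
  match k with
  | 0 => w1
  | k'.+1 =>
    let wk := ogd_w W mix w1 alpha x P k' in
    proj W (wk - alpha *: grad (fun w => ell (x k) (mix w (P k))) wk)
  end.

Definition ogd_len (W : set 'rV[R]_m) (mix : 'rV[R]_m -> 'M[R]_(m, N) -> 'I_N -> R)
    (w1 : 'rV[R]_m) (alpha : R) (x : nat -> 'I_N) (P : nat -> 'M[R]_(m, N))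
    (n : nat) : R :=
  \sum_(1 <= k < n.+1) ell (x k) (mix (ogd_w W mix w1 alpha x P k.-1) (P k)).

Definition lstar (W : set 'rV[R]_m) (mix : 'rV[R]_m -> 'M[R]_(m, N) -> 'I_N -> R)
    (y : nat -> 'I_N) (Q : nat -> 'M[R]_(m, N)) (i j : nat) : R :=
  inf [set \sum_(i <= k < j.+1) ell (y k) (mix w (Q k)) | w in W].

End Defs.

Definition segmentation (n s : nat) (t : nat -> nat) : Prop :=
  [/\ (1 <= s <= n)%N, t 1%N = 1%N, t s.+1 = n.+1 &
      forall i, (1 <= i <= s)%N -> (t i < t i.+1)%N].

(* For every comparator u in W, one OGD step with step size
   alpha = 2 (1 - 1/b) / a satisfies
     f_k(w_k) <= b f_k(u) + C_b (|w_k - u|^2 - |w_(k+1) - u|^2),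
     C_b = a b^2 / (4 (b - 1)):
   the projection onto the convex set W does not increase the distance to u,
   convexity bounds <grad f_k(w_k), u - w_k> by f_k(u) - f_k(w_k), and
   |grad f_k|^2 <= a f_k absorbs the quadratic term.  Summed over one segment
   of a segmentation the distances telescope to at most |W|^2, and minimizing
   over u gives part 1.  Part 2 is part 1 with b = 1 + 1/sqrt n, for which
   C_b <= a sqrt n and (b - 1) sum_i l*(segment i) <= c n / sqrt n. *)

From Pilot Require Import Defs.
From HB Require Import structures.
From mathcomp Require Import all_boot all_order all_algebra.
From mathcomp Require Import all_classical all_reals all_analysis.
From mathcomp Require Import ring lra zify.
Set Implicit Arguments. Unset Strict Implicit. Unset Printing Implicit Defensive.
Import Order.TTheory GRing.Theory Num.Theory.
Import numFieldNormedType.Exports.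
Local Open Scope classical_set_scope.
Local Open Scope ring_scope.

Section Euclid.
Variables (R : realType) (m : nat).
Implicit Types (u v w : 'rV[R]_m).

Definition vdot u v : R := \sum_(i < m) u 0 i * v 0 i.
Definition vnorm2 u : R := vdot u u.

Lemma vnorm2_ge0 u : 0 <= vnorm2 u.
Proof. by apply: sumr_ge0 => i _; rewrite -expr2 sqr_ge0. Qed.

Lemma enorm_sqr u : enorm u ^+ 2 = vnorm2 u.
Proof.
rewrite /enorm sqr_sqrtr; last by apply: sumr_ge0 => i _; rewrite sqr_ge0.
by apply: eq_bigr => i _; rewrite expr2.
Qed.

Lemma vdotNr u v : vdot u (- v) = - vdot u v.
Proof. by rewrite /vdot -sumrN; apply: eq_bigr => i _; rewrite mxE mulrN. Qed.

Lemma vdotC u v : vdot u v = vdot v u.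
Proof. by apply: eq_bigr => i _; rewrite mulrC. Qed.

Lemma vnorm2N u : vnorm2 (- u) = vnorm2 u.
Proof. by apply: eq_bigr => i _; rewrite !mxE mulrNN. Qed.

Lemma vnorm2DZ u v (t : R) :
  vnorm2 (u + t *: v) = vnorm2 u + 2 * t * vdot u v + t ^+ 2 * vnorm2 v.
Proof.
rewrite /vnorm2 /vdot !mulr_sumr -!big_split /=.
by apply: eq_bigr => i _; rewrite !mxE; ring.
Qed.

Lemma vnorm2B_le u v : vnorm2 (u - v) <= 2 * vnorm2 u + 2 * vnorm2 v.
Proof.
rewrite /vnorm2 /vdot !mulr_sumr -big_split /=; apply: ler_sum => i _.
rewrite !mxE; have := sqr_ge0 (u 0 i + v 0 i); rewrite expr2; nra.
Qed.

Lemma continuous_sum (T : topologicalType) (I : Type) (r : seq I)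
    (g : I -> T -> R) :
  (forall i, continuous (g i)) -> continuous (fun z => \sum_(i <- r) g i z).
Proof.
move=> gc; elim: r => [|i r IHr].
  have -> : (fun z => \sum_(i <- [::]) g i z) = cst 0.
    by apply/funext => z; rewrite big_nil.
  exact: cst_continuous.
have -> : (fun z => \sum_(j <- i :: r) g j z) = g i \+ (fun z => \sum_(j <- r) g j z).
  by apply/funext => z; rewrite big_cons.
by move=> z; apply: continuousD; [exact: gc | exact: IHr].
Qed.

Lemma continuous_vnorm2B v : continuous (fun w => vnorm2 (v - w)).
Proof.
apply: continuous_sum => i w.
have cB : continuous (fun w : 'rV[R]_m => (v - w) 0 i).
  rewrite (_ : (fun w => _) = (fun w => v 0 i - w 0 i)).
    by move=> z; apply: continuousB; [exact: cst_continuous | exact: coord_continuous].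
  by apply/funext => z; rewrite !mxE.
by apply: continuousM; apply: cB.
Qed.

End Euclid.

Lemma le0_of_forall_le_scale (K : realFieldType) (d q : K) :
  0 <= q -> (forall t, 0 < t <= 1 -> 2 * d <= t * q) -> d <= 0.
Proof.
move=> q0 dq; rewrite leNgt; apply/negP => d0.
have dq0 : 0 < d + q by lra.
have t0 : 0 < d / (d + q) by rewrite divr_gt0.
have t1 : d / (d + q) <= 1 by rewrite ler_pdivrMr // mul1r lerDl.
have := dq _ (introT andP (conj t0 t1)).
rewrite mulrAC ler_pdivlMr //; nra.
Qed.

Section Projection.
Variables (R : realType) (m : nat) (W : set 'rV[R]_m).
Hypotheses (W0 : W !=set0) (Wc : compact W) (Wcvx : Defs.convex_set W).
Implicit Types (u v w : 'rV[R]_m).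

Lemma proj_min v :
  W (Defs.proj W v) /\ forall u, W u -> vnorm2 (v - Defs.proj W v) <= vnorm2 (v - u).
Proof.
have [c /set_mem Wc' cmin] : exists2 c, c \in W &
    forall u, u \in W -> vnorm2 (v - c) <= vnorm2 (v - u).
  by apply: EVT_min_rV => //; apply: continuous_subspaceT; exact: continuous_vnorm2B.
have ex_min : exists w, [set w | W w /\ forall u, W u ->
    enorm (v - w) ^+ 2 <= enorm (v - u) ^+ 2] w.
  by exists c; split=> // u Wu; rewrite !enorm_sqr; apply: cmin; rewrite inE.
have [Wp pmin] := xgetPex 0 ex_min.
by split=> // u Wu; rewrite -!enorm_sqr; apply: pmin.
Qed.

Lemma proj_in v : W (Defs.proj W v).
Proof. by case: (proj_min v). Qed.

(* Minimality against the points t u + (1 - t) (proj v) of W, 0 < t <= 1. *)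
Lemma proj_vdot_le0 v u : W u -> vdot (v - Defs.proj W v) (u - Defs.proj W v) <= 0.
Proof.
move=> Wu; have [Wp pmin] := proj_min v; set p := Defs.proj W v in Wp pmin *.
apply: (le0_of_forall_le_scale (vnorm2_ge0 (u - p))) => t /andP[t0 t1].
have Wt : W (t *: u + (1 - t) *: p) by apply: Wcvx; rewrite ?(ltW t0).
have := pmin _ Wt.
have -> : v - (t *: u + (1 - t) *: p) = (v - p) + (- t) *: (u - p).
  by apply/matrixP => i j; rewrite !mxE; ring.
rewrite vnorm2DZ sqrrN => le_tu.
have : 0 <= t * (t * vnorm2 (u - p) - 2 * vdot (v - p) (u - p)) by nra.
by rewrite pmulr_rge0 // subr_ge0.
Qed.

Lemma proj_vnorm2_le v u : W u -> vnorm2 (Defs.proj W v - u) <= vnorm2 (v - u).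
Proof.
move=> Wu; have := proj_vdot_le0 v Wu; set p := Defs.proj W v => obtuse.
have -> : v - u = (v - p) + 1 *: (p - u).
  by apply/matrixP => i j; rewrite !mxE; ring.
rewrite vnorm2DZ expr1n mul1r -[p - u]opprB vdotNr.
have := vnorm2_ge0 (v - p); lra.
Qed.

Lemma compact_vnorm2_bounded : exists K, forall u, W u -> vnorm2 u <= K.
Proof.
have [c _ cmax] : exists2 c, c \in W &
    forall u, u \in W -> vnorm2 (0 - u) <= vnorm2 (0 - c).
  by apply: EVT_max_rV => //; apply: continuous_subspaceT; exact: continuous_vnorm2B.
exists (vnorm2 (0 - c)) => u Wu; have := cmax u; rewrite inE => /(_ Wu).
by rewrite !sub0r !vnorm2N.
Qed.

Lemma enorm_le_diam u v : W u -> W v -> enorm (u - v) <= diam W.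
Proof.
move=> Wu Wv; have [K WK] := compact_vnorm2_bounded.
apply: ub_le_sup; last by exists u => //; exists v.
exists (1 + 4 * K) => _ [p Wp [q Wq <-]].
have := WK p Wp; have := WK q Wq; have := vnorm2B_le p q.
have := enorm_sqr (p - q); have := sqr_ge0 (enorm (p - q) - 1).
rewrite !expr2; nra.
Qed.

Lemma vnorm2B_le_diam u v : W u -> W v -> vnorm2 (u - v) <= diam W ^+ 2.
Proof.
move=> Wu Wv; have e0 : 0 <= enorm (u - v) by apply: sqrtr_ge0.
rewrite -enorm_sqr ler_sqr ?nnegrE ?enorm_le_diam //.
exact: le_trans (enorm_le_diam Wu Wv).
Qed.

End Projection.

Section Gradient.
Variables (R : realType) (m : nat).
Implicit Types (f : 'rV[R]_m -> R) (u v w : 'rV[R]_m).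

Lemma vdot_grad f w v : differentiable f w -> vdot (grad f w) v = 'D_v f w.
Proof.
move=> df; rewrite /vdot /grad.
rewrite (eq_bigr (fun i => 'd f w (v 0 i *: delta_mx 0 i))); last first.
  by move=> i _; rewrite !mxE deriveE // linearZ /= mulrC.
by rewrite -linear_sum /= -row_sum_delta deriveE.
Qed.

Lemma convex_derive_le (W : set 'rV[R]_m) f w u :
  Defs.convex_on W f -> W w -> W u -> differentiable f w ->
  'D_(u - w) f w <= f u - f w.
Proof.
move=> fcvx Ww Wu df.
apply: (cvgr_to_le (cvg_dnbhs_at_right (diff_derivable df))).
near=> h.
have h0 : 0 < h by near: h; exact: nbhs_right_gt.
have h1 : h <= 1 by near: h; apply: nbhs_right_le; exact: ltr01.
rewrite /= -[_ *: _]/(_ * _) ler_pdivrMl //.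
have -> : h *: (u - w) + w = h *: u + (1 - h) *: w.
  by apply/matrixP => i j; rewrite !mxE; ring.
have := fcvx u w h Wu Ww; rewrite (ltW h0) h1 => /(_ isT); lra.
Unshelve. all: by end_near.
Qed.

Lemma vdot_grad_le (W : set 'rV[R]_m) f w u :
  Defs.convex_on W f -> W w -> W u -> differentiable f w ->
  vdot (grad f w) (u - w) <= f u - f w.
Proof.
by move=> fcvx Ww Wu df; rewrite vdot_grad //; exact: convex_derive_le fcvx Ww Wu df.
Qed.

End Gradient.

Definition ogd_rate (R : realFieldType) (a b : R) : R := 2 * (1 - b^-1) / a.
Definition regret_const (R : realFieldType) (a b : R) : R := a * b ^+ 2 / (4 * (b - 1)).

Section OgdStep.
Variables (R : realType) (m : nat) (W : set 'rV[R]_m).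
Hypotheses (W0 : W !=set0) (Wc : compact W) (Wcvx : Defs.convex_set W).
Variables (a b : R).
Hypotheses (a0 : 0 < a) (b1 : 1 < b).

Let al := ogd_rate a b.
Let C := regret_const a b.

Lemma ogd_rate_gt0 : 0 < al.
Proof.
rewrite /al /ogd_rate divr_gt0 // mulr_gt0 // subr_gt0 invf_lt1 //.
exact: lt_trans ltr01 b1.
Qed.

Lemma regret_const_ge0 : 0 <= C.
Proof.
apply: divr_ge0; first by rewrite mulr_ge0 ?sqr_ge0 ?ltW.
by rewrite mulr_ge0 // subr_ge0 ltW.
Qed.

(* [C * 2 al = b] and [C * al^2 a = b - 1]: these two identities are what
   the choice of step size [al] is tuned for. *)
Lemma regret_const_rate : C * (2 * al) = b /\ C * (al ^+ 2 * a) = b - 1.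
Proof.
have b0 : b != 0 by rewrite gt_eqF // (lt_trans ltr01).
have b10 : b - 1 != 0 by rewrite subr_eq0 gt_eqF.
by rewrite /C /al /regret_const /ogd_rate; split; field; rewrite b0 b10 gt_eqF.
Qed.

Lemma ogd_step_le (f : 'rV[R]_m -> R) w u :
  Defs.convex_on W f -> W w -> W u -> differentiable f w ->
  enorm (grad f w) ^+ 2 <= a * f w ->
  f w <= b * f u + C * (vnorm2 (w - u) - vnorm2 (Defs.proj W (w - al *: grad f w) - u)).
Proof.
move=> fcvx Ww Wu df grad_le; set g := grad f w.
have lin := vdot_grad_le fcvx Ww Wu df; rewrite -/g in lin.
rewrite enorm_sqr -/g in grad_le.
have := proj_vnorm2_le W0 Wc Wcvx (w - al *: g) Wu.
have -> : w - al *: g - u = (w - u) + (- al) *: g.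
  by apply/matrixP => i j; rewrite !mxE; ring.
rewrite vnorm2DZ sqrrN vdotC -[w - u]opprB vdotNr vnorm2N.
set B := vnorm2 (Defs.proj _ _ - u); set A := vnorm2 (u - w).
set D := vdot g (u - w); set G := vnorm2 g.
set fw := f w in lin grad_le *; set fu := f u in lin *.
move=> desc.
have al0 := ogd_rate_gt0; have [e1 e2] := regret_const_rate.
have hD : al * D <= al * (fu - fw) by rewrite ler_pM2l.
have hG : al ^+ 2 * G <= al ^+ 2 * (a * fw) by rewrite ler_wpM2l ?sqr_ge0.
have hAB : 2 * al * (fw - fu) - al ^+ 2 * a * fw <= A - B by lra.
have := ler_wpM2l regret_const_ge0 hAB.
have -> : C * (2 * al * (fw - fu) - al ^+ 2 * a * fw) =
    C * (2 * al) * (fw - fu) - C * (al ^+ 2 * a) * fw by ring.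
rewrite e1 e2; lra.
Qed.

End OgdStep.

Section Segmentation.
Variables (n s : nat) (t : nat -> nat).
Hypothesis seg : segmentation n s t.

Lemma segmentation_mono i j : (1 <= i <= j)%N -> (j <= s.+1)%N -> (t i <= t j)%N.
Proof.
case: seg => _ _ _ tS /andP[i1]; elim: j => [|j IHj] ij js; first by lia.
have [->|ij'] := eqVneq i j.+1; first by [].
have tj : (t j < t j.+1)%N by apply: tS; lia.
have := IHj (_ : i <= j)%N (ltnW js); lia.
Qed.

Lemma segmentation_block i : (1 <= i <= s)%N ->
  [/\ (1 <= t i)%N, (t i < t i.+1)%N & (t i.+1 <= n.+1)%N].
Proof.
move=> hi; have [_ t1 ts tS] := seg; split; last first.
- by rewrite -ts segmentation_mono //; lia.
- exact: tS.
- by rewrite -t1 segmentation_mono //; lia.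
Qed.

Lemma sum_segmentation (V : nmodType) (g : nat -> V) :
  \sum_(1 <= k < n.+1) g k = \sum_(1 <= i < s.+1) \sum_(t i <= k < t i.+1) g k.
Proof.
have [_ t1 ts _] := seg.
suff partial j : (1 <= j <= s.+1)%N ->
    \sum_(1 <= k < t j) g k = \sum_(1 <= i < j) \sum_(t i <= k < t i.+1) g k.
  by rewrite -ts partial //; lia.
elim: j => [|j IHj] hj; first by lia.
have [->|j0] := posnP j; first by rewrite t1 !big_geq.
rewrite big_nat_recr /=; last by lia.
rewrite -IHj; last by lia.
rewrite -big_cat_nat //; last by apply: segmentation_mono; lia.
by rewrite -t1 segmentation_mono //; lia.
Qed.
End Segmentation.

Section Lstar.
Variables (R : realType) (N m : nat) (W : set 'rV[R]_m)
  (mix : 'rV[R]_m -> 'M[R]_(m, N) -> 'I_N -> R) (y : nat -> 'I_N)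
  (Q : nat -> 'M[R]_(m, N)).

Lemma lstar_ge i j r : W !=set0 ->
  (forall w, W w -> r <= \sum_(i <= k < j.+1) ell (y k) (mix w (Q k))) ->
  r <= lstar W mix y Q i j.
Proof.
move=> [w Ww] lb; apply: lb_le_inf; last by move=> _ [v Wv <-]; exact: lb.
by exists (\sum_(i <= k < j.+1) ell (y k) (mix w (Q k))), w.
Qed.

Lemma lstar_shift i k :
  lstar W mix y Q i.+1 (i + k) =
  lstar W mix (fun j => y (j + i)) (fun j => Q (j + i)) 1 k.
Proof.
rewrite /lstar; congr inf; apply: eq_imagel => w _.
by rewrite -add1n big_addn subSn ?leq_addr // addKn.
Qed.

End Lstar.

Lemma regret_const_sqrt (R : realFieldType) (a r : R) : 0 < a -> 1 <= r ->
  ogd_rate a (1 + r^-1) = 2 / a * (1 + r)^-1 /\ regret_const a (1 + r^-1) <= a * r.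
Proof.
move=> a0 r1; have r0 : 0 < r by lra.
have -> : regret_const a (1 + r^-1) = a * ((r + 1) ^+ 2 / (4 * r)).
  rewrite /regret_const; field.
  by rewrite (_ : r + 1 + -1 * r = 1) ?oner_eq0 ?gt_eqF //; ring.
have r10 : 0 < 1 + r by lra.
split; first by rewrite /ogd_rate; field; rewrite !gt_eqF.
rewrite ler_pM2l // ler_pdivrMr; nra.
Qed.

Section MixOgd.
Variables (R : realType) (N m : nat) (W : set 'rV[R]_m)
  (mix : 'rV[R]_m -> 'M[R]_(m, N) -> 'I_N -> R) (a : R).
Hypothesis mix_nice : nice W mix a.
Variables (n : nat) (x : nat -> 'I_N) (P : nat -> 'M[R]_(m, N)).
Hypothesis P_prob : forall k, (1 <= k <= n)%N -> probmat (P k).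
Variable w1 : 'rV[R]_m.
Hypothesis W_w1 : W w1.

Let loss k w := ell (x k) (mix w (P k)).

Let W0 : W !=set0. Proof. by case: mix_nice => [[]]. Qed.
Let Wc : compact W. Proof. by case: mix_nice => [[]]. Qed.
Let Wcvx : Defs.convex_set W. Proof. by case: mix_nice => [[]]. Qed.
Let a0 : 0 < a. Proof. by case: mix_nice => _ [_ [_ [_ []]]]. Qed.

Lemma ogd_w_in alpha k : W (ogd_w W mix w1 alpha x P k).
Proof. by case: k => [|k] //=; exact: proj_in. Qed.

Section Rate.
Variable b : R.
Hypothesis b1 : 1 < b.

Let w k := ogd_w W mix w1 (ogd_rate a b) x P k.
Let C := regret_const a b.

Lemma ogd_loss_le k u : (1 <= k <= n)%N -> W u ->
  loss k (w k.-1) <= b * loss k u + C * (vnorm2 (w k.-1 - u) - vnorm2 (w k - u)).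
Proof.
case: k => [//|k] hk Wu; have Pk := P_prob hk.
case: mix_nice => _ [_ [cvx [diff [_ grad_le]]]].
have Wk := ogd_w_in (ogd_rate a b) k.
by apply: ogd_step_le => //; [exact: cvx | exact: diff | exact: grad_le].
Qed.

Lemma ogd_block_le p q u : (1 <= p <= q)%N -> (q <= n.+1)%N -> W u ->
  \sum_(p <= k < q) loss k (w k.-1) <=
    b * \sum_(p <= k < q) loss k u + C * (vnorm2 (w p.-1 - u) - vnorm2 (w q.-1 - u)).
Proof.
move=> /andP[p1 pq] qn Wu.
set F := fun k => - vnorm2 (w k.-1 - u).
apply: le_trans (_ : _ <= \sum_(p <= k < q) (b * loss k u + C * (F k.+1 - F k))) _.
  apply: ler_sum_nat => k /andP[pk kq]; rewrite /F /= opprK (addrC (- _)).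
  by apply: ogd_loss_le => //; lia.
by rewrite big_split /= -!mulr_sumr telescope_sumr // /F opprK (addrC (- _)).
Qed.

Lemma ogd_block_le_lstar p q : (1 <= p < q)%N -> (q <= n.+1)%N ->
  \sum_(p <= k < q) loss k (w k.-1) <= C * diam W ^+ 2 + b * lstar W mix x P p q.-1.
Proof.
move=> /andP[p1 pq] qn; have b0 : 0 < b := lt_trans ltr01 b1.
rewrite addrC -lerBlDr -ler_pdivrMl //; apply: lstar_ge => // u Wu.
rewrite prednK ?(leq_trans p1 (ltnW pq)) // ler_pdivrMl // lerBlDr.
have := ogd_block_le (_ : 1 <= p <= q)%N qn Wu; rewrite p1 ltnW // => /(_ isT).
have far := vnorm2B_le_diam W0 Wc (ogd_w_in (ogd_rate a b) p.-1) Wu.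
have near0 := vnorm2_ge0 (w q.-1 - u).
have C0 : 0 <= C := regret_const_ge0 a0 b1.
set A := vnorm2 (w p.-1 - u) in far *; set B := vnorm2 (w q.-1 - u) in near0 *.
have : C * (A - B) <= C * diam W ^+ 2 by apply: ler_wpM2l => //; lra.
lra.
Qed.

Lemma ogd_len_le_segments s t : segmentation n s t ->
  ogd_len W mix w1 (ogd_rate a b) x P n <=
    C * diam W ^+ 2 * s%:R + b * \sum_(1 <= i < s.+1) lstar W mix x P (t i) (t i.+1).-1.
Proof.
move=> seg; rewrite /ogd_len (sum_segmentation seg) mulr_sumr.
have -> : C * diam W ^+ 2 * s%:R = \sum_(1 <= i < s.+1) C * diam W ^+ 2.
  by rewrite sumr_const_nat subn1 mulr_natr.
rewrite -big_split /=; apply: ler_sum_nat => i hi.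
have [ti1 tlt tn] := segmentation_block seg hi.
by apply: ogd_block_le_lstar; rewrite ?ti1.
Qed.

End Rate.

Lemma sum_lstar_segments_le (c : R) s t :
  (forall (k : nat) (y : nat -> 'I_N) (Q : nat -> 'M[R]_(m, N)),
     (1 <= k)%N -> (forall j, (1 <= j <= k)%N -> probmat (Q j)) ->
     lstar W mix y Q 1 k <= c * k%:R) ->
  segmentation n s t ->
  \sum_(1 <= i < s.+1) lstar W mix x P (t i) (t i.+1).-1 <= c * n%:R.
Proof.
move=> lstar_lin seg.
have -> : n%:R = \sum_(1 <= k < n.+1) (1 : R) by rewrite sumr_const_nat subn1.
rewrite (sum_segmentation seg) mulr_sumr.
apply: ler_sum_nat => i hi; have [ti1 tlt tn] := segmentation_block seg hi.
rewrite sumr_const_nat.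
have -> : (t i.+1).-1 = ((t i).-1 + (t i.+1 - t i))%N by lia.
rewrite -{1}(prednK ti1) lstar_shift.
apply: lstar_lin; first by lia.
by move=> j hj; apply: P_prob; lia.
Qed.

Lemma ogd_len_le_sqrt (c : R) s t :
  (forall (k : nat) (y : nat -> 'I_N) (Q : nat -> 'M[R]_(m, N)),
     (1 <= k)%N -> (forall j, (1 <= j <= k)%N -> probmat (Q j)) ->
     lstar W mix y Q 1 k <= c * k%:R) ->
  segmentation n s t ->
  ogd_len W mix w1 (2 / a * (1 + Num.sqrt n%:R)^-1) x P n <=
    (a * s%:R * diam W ^+ 2 + c) * Num.sqrt n%:R
    + \sum_(1 <= i < s.+1) lstar W mix x P (t i) (t i.+1).-1.
Proof.
move=> lstar_lin seg; have [/andP[s1 sn] _ _ _] := seg.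
have S_le := sum_lstar_segments_le lstar_lin seg.
set S := \sum_(_ <= _ < _) _ in S_le *; set r := Num.sqrt n%:R.
have r1 : 1 <= r by rewrite -sqrtr1 ler_sqrt // ler1n; lia.
have r0 : 0 < r := lt_le_trans ltr01 r1.
have [<- C_le] := regret_const_sqrt a0 r1.
have b1 : 1 < 1 + r^-1 by rewrite ltrDl invr_gt0.
apply: le_trans (ogd_len_le_segments b1 seg) _.
have CDs : regret_const a (1 + r^-1) * diam W ^+ 2 * s%:R <= a * r * diam W ^+ 2 * s%:R.
  by rewrite ler_wpM2r ?ler_wpM2r ?sqr_ge0.
have Sr : r^-1 * S <= c * r.
  by rewrite mulrC ler_pdivrMr // -mulrA -expr2 sqr_sqrtr.
rewrite -/S mulrDl mul1r; lra.
Qed.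

End MixOgd.

Theorem theorem1 (R : realType) (N m : nat) (hN : (1 < N)%N) (hm : (1 < m)%N)
  (W : set 'rV[R]_m) (mix : 'rV[R]_m -> 'M[R]_(m, N) -> 'I_N -> R) (a : R)
  (hnice : nice W mix a)
  (n : nat) (hn : (1 <= n)%N) (x : nat -> 'I_N) (P : nat -> 'M[R]_(m, N))
  (hP : forall k, (1 <= k <= n)%N -> probmat (P k))
  (w1 : 'rV[R]_m) (hw1 : W w1) :
  (forall b : R, 1 < b ->
     forall (s : nat) (t : nat -> nat), segmentation n s t ->
       ogd_len W mix w1 (2 * (1 - b^-1) / a) x P n <=
         a * b ^+ 2 * diam W ^+ 2 / (4 * (b - 1)) * s%:R
         + b * \sum_(1 <= i < s.+1) lstar W mix x P (t i) (t i.+1).-1)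
  /\
  (forall c : R, 0 < c ->
     (forall (k : nat) (y : nat -> 'I_N) (Q : nat -> 'M[R]_(m, N)),
        (1 <= k)%N -> (forall j, (1 <= j <= k)%N -> probmat (Q j)) ->
        lstar W mix y Q 1 k <= c * k%:R) ->
     forall (s : nat) (t : nat -> nat), segmentation n s t ->
       ogd_len W mix w1 (2 / a * (1 + Num.sqrt n%:R)^-1) x P n <=
         (a * s%:R * diam W ^+ 2 + c) * Num.sqrt n%:R
         + \sum_(1 <= i < s.+1) lstar W mix x P (t i) (t i.+1).-1).
Proof.
split=> [b b1 s t seg | c _ lstar_lin s t seg].
- have -> : a * b ^+ 2 * diam W ^+ 2 / (4 * (b - 1)) =
      regret_const a b * diam W ^+ 2 by rewrite mulrAC.
  exact (ogd_len_le_segments hnice x hP hw1 b1 seg).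
- exact (ogd_len_le_sqrt hnice x hP hw1 lstar_lin seg).
Qed.
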